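(* Let $\Bbbk$ be a field of characteristic $0$ and $A=\Bbbk[t]$ over $B=\Bbbk$. A double bracket on $A$ is quasi-Poisson if and only if it is of the form $$\{\!\{t,t\}\!\}=\lambda(t\otimes1-1\otimes t)+\mu(t^2\otimes1-1\otimes t^2)+\nu(t^2\otimes t-t\otimes t^2)$$ for some $\lambda,\mu,\nu\in\Bbbk$ with $4(\mu^2-\lambda\nu)=1$.
   Context: $\otimes=\otimes_\Bbbk$; Sweedler notation $d=d'\otimes d''$. A double bracket on $A$ is a $\Bbbk$-bilinear map $A\times A\to A\otimes A$ with $\{\!\{a,b\}\!\}=-\{\!\{b,a\}\!\}''\otimes\{\!\{b,a\}\!\}'$ and $\{\!\{a,bc\}\!\}=\{\!\{a,b\}\!\}c+b\{\!\{a,c\}\!\}$, where $x(d'\otimes d'')y=xd'\otimes d''y$. Its triple bracket is $\{\!\{a,b,c\}\!\}=\{\!\{a,\{\!\{b,c\}\!\}'\}\!\}\otimes\{\!\{b,c\}\!\}''+\tau\{\!\{b,\{\!\{c,a\}\!\}'\}\!\}\otimes\{\!\{c,a\}\!\}''+\tau^2\{\!\{c,\{\!\{a,b\}\!\}'\}\!\}\otimes\{\!\{a,b\}\!\}''$, with $\tau(x_1\otimes x_2\otimes x_3)=x_3\otimes x_1\otimes x_2$. It is quasi-Poisson (over $B=\Bbbk$) if $\{\!\{a,b,c\}\!\}=\frac14(ca\otimes b\otimes1-ca\otimes1\otimes b-c\otimes ab\otimes1+c\otimes a\otimes b-a\otimes b\otimes c+a\otimes1\otimes bc+1\otimes ab\otimes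 c-1\otimes a\otimes bc)$ for all $a,b,c\in A$. *)

From HB Require Import structures.
From mathcomp Require Import all_boot all_order all_algebra.
From mathcomp Require Import mpoly.
Set Implicit Arguments. Unset Strict Implicit. Unset Printing Implicit Defensive.
Import GRing.Theory.
Local Open Scope ring_scope.

(* A = K[t] is {poly K}.  Identification A^{(x)n} = K[x_0,...,x_{n-1}]:
   a_1 (x) ... (x) a_n  <->  a_1(x_0) * ... * a_n(x_{n-1}). *)
Section DoubleBrackets.
Variable K : fieldType.

Definition A := {poly K}.
Definition A2 := {mpoly K[2]}.
Definition A3 := {mpoly K[3]}.

Definition emb (n : nat) (i : 'I_n) (p : A) : {mpoly K[n]} :=
  (map_poly (@mpolyC n K) p).['X_i].

Definition i20 : 'I_2 := @Ordinal 2 0 isT.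
Definition i21 : 'I_2 := @Ordinal 2 1 isT.
Definition i30 : 'I_3 := @Ordinal 3 0 isT.
Definition i31 : 'I_3 := @Ordinal 3 1 isT.
Definition i32 : 'I_3 := @Ordinal 3 2 isT.

Definition tens2 (a b : A) : A2 := emb i20 a * emb i21 b.
Definition tens3 (a b c : A) : A3 := emb i30 a * emb i31 b * emb i32 c.

Definition swap2 (d : A2) : A2 := d \mPo [tuple 'X_i21; 'X_i20].
(* tau (x1 (x) x2 (x) x3) = x3 (x) x1 (x) x2 *)
Definition tau3 (d : A3) : A3 := d \mPo [tuple 'X_i31; 'X_i32; 'X_i30].
Definition incl12 (d : A2) : A3 := d \mPo [tuple 'X_i30; 'X_i31].

(* the outer bimodule structure x (d' (x) d'') y = x d' (x) d'' y *)
Definition bimod (x : A) (d : A2) (y : A) : A2 := emb i20 x * d * emb i21 y.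

Definition double_bracket (br : A -> A -> A2) : Prop :=
  [/\ (forall (k : K) a b c, br (k *: a + b) c = k *: br a c + br b c),
      (forall (k : K) a b c, br a (k *: b + c) = k *: br a b + br a c),
      (forall a b, br a b = - swap2 (br b a)) &
      (forall a b c, br a (b * c) = bimod 1 (br a b) c + bimod b (br a c) 1)].

(* the K-linear map A2 -> A3 : d' (x) d'' |-> {{a, d'}} (x) d''
   (defined on the monomial basis t^i (x) t^j) *)
Definition brL (br : A -> A -> A2) (a : A) (d : A2) : A3 :=
  \sum_(m <- msupp d)
     d@_m *: (incl12 (br a ('X ^+ (m i20))) * 'X_i32 ^+ (m i21)).

Definition triple_bracket (br : A -> A -> A2) (a b c : A) : A3 :=
  brL br a (br b c) + tau3 (brL br b (br c a)) + tau3 (tau3 (brL br c (br a b))).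

Definition quasi_Poisson (br : A -> A -> A2) : Prop :=
  forall a b c : A, triple_bracket br a b c =
    4^-1 *: (tens3 (c * a) b 1 - tens3 (c * a) 1 b - tens3 c (a * b) 1
             + tens3 c a b - tens3 a b c + tens3 a 1 (b * c)
             + tens3 1 (a * b) c - tens3 1 a (b * c)).

End DoubleBrackets.

From HB Require Import structures.
From mathcomp Require Import all_boot all_order all_algebra.
From mathcomp Require Import mpoly.
From mathcomp Require Import ring zify.
Import GRing.Theory.
Local Open Scope ring_scope.
Set Implicit Arguments.

(* Identify the n-th tensor power of A = K[t] with K[x_0, ..., x_{n-1}].
   Since {{a, -}} is a derivation, (x_0 - x_1) {{a, p}} = {{a, t}} (p(x_0) - p(x_1));
   with antisymmetry, (x_0 - x_1)^2 {{a, b}} = P (a(x_0) - a(x_1)) (b(x_0) - b(x_1))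
   where P = {{t, t}}.  Hence the triple bracket times the discriminant
   D = (x_0 - x_1)^2 (x_0 - x_2)^2 (x_1 - x_2)^2 is an explicit cyclic sum in P,
   and being quasi-Poisson is a polynomial identity.
   If P = (x_0 - x_1) (l + m (x_0 + x_1) + n x_0 x_1), that cyclic sum equals
   (m^2 - l n) D (a(x_0) - a(x_1)) (b(x_1) - b(x_2)) (c(x_0) - c(x_2)), which is
   the quasi-Poisson right-hand side exactly when 4 (m^2 - l n) = 1.
   Conversely, P is antisymmetric, so P = (x_0 - x_1) S with S symmetric
   (using 2 != 0), and the identity for a = b = c = t becomes
     (x_1 - x_2) S_01 S_02 + (x_2 - x_0) S_01 S_12 + (x_0 - x_1) S_12 S_02
       = 1/4 (x_0 - x_1) (x_1 - x_2) (x_0 - x_2),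
   where S_ij = S(x_i, x_j).  Comparing degrees in x_2 shows that S has degree
   at most 1 in its second variable, so the symmetric S is
   l + m (x_0 + x_1) + n x_0 x_1. *)

Lemma mpoly_rmorph_ext n (R : nzRingType) (S : nzRingType)
    (f g : {rmorphism {mpoly R[n]} -> S}) :
  (forall c, f c%:MP = g c%:MP) -> (forall i, f 'X_i = g 'X_i) -> f =1 g.
Proof.
move=> eqC eqX p; rewrite (mpolyE p) !rmorph_sum; apply: eq_bigr => m _.
rewrite -mul_mpolyC !rmorphM eqC mpolyXE_id !rmorph_prod; congr (_ * _).
by apply: eq_bigr => i _; rewrite !rmorphXn eqX.
Qed.

Lemma big_ord2 (R : Type) (idx : R) (op : Monoid.law idx) (F : 'I_2 -> R) :
  \big[op/idx]_(i < 2) F i = op (F i20) (F i21).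
Proof. by rewrite big_ord_recr big_ord1; congr (op (F _) (F _)); apply: val_inj. Qed.

Lemma mpolyXB_neq0 n (R : nzRingType) (i j : 'I_n) :
  i != j -> 'X_i - 'X_j != 0 :> {mpoly R[n]}.
Proof.
move=> ij; apply/eqP => /(congr1 (mcoeff U_(i))).
rewrite mcoeffB !mcoeffXU eqxx eq_sym (negbTE ij) mcoeff0 subr0 => /eqP.
by rewrite oner_eq0.
Qed.

Lemma comp_mpoly2A (R : comNzRingType) k l (p : {mpoly R[2]}) (a b : {mpoly R[k]})
    (lr : k.-tuple {mpoly R[l]}) :
  p \mPo [tuple a; b] \mPo lr = p \mPo [tuple a \mPo lr; b \mPo lr].
Proof.
apply: (mpoly_rmorph_ext (comp_mpoly lr \o comp_mpoly [tuple a; b])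
          (comp_mpoly [tuple a \mPo lr; b \mPo lr])) => [c|[[|[|//]] ?]] /=.
  by rewrite !comp_mpolyC.
all: by rewrite !comp_mpolyXU.
Qed.

Lemma comp_mpoly2_const (R : comNzRingType) k (p : {mpoly R[2]}) (a b : R) :
  exists c, p \mPo [tuple a%:MP_[k]; b%:MP_[k]] = c%:MP_[k].
Proof.
pose v (i : 'I_2) := if val i == 0%N then a else b.
exists p.@[v]; apply: (mpoly_rmorph_ext (comp_mpoly [tuple a%:MP_[k]; b%:MP_[k]])
                          (@mpolyC k R \o meval v)) => [c|[[|[|//]] ?]] /=.
- by rewrite comp_mpolyC mevalC.
- by rewrite comp_mpolyXU mevalXU.
- by rewrite comp_mpolyXU mevalXU.
Qed.

Lemma mpoly2_subdiag_factor (R : comNzRingType) (p : {mpoly R[2]}) :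
  exists q, p - (p \mPo [tuple 'X_i21; 'X_i21]) = ('X_i20 - 'X_i21) * q.
Proof.
exists (\sum_(m <- msupp p) p@_m *:
   ((\sum_(i < m i20) 'X_i20 ^+ ((m i20).-1 - i) * 'X_i21 ^+ i) * 'X_i21 ^+ m i21)).
rewrite {1}(mpolyE p) comp_mpolyE -sumrB mulr_sumr; apply: eq_bigr => m _.
rewrite mpolyXE_id !big_ord2 /= -scalerBr -scalerAr; congr (_ *: _).
by rewrite -mulrBl subrXX mulrA.
Qed.

Section MuniX.
Variables (n : nat) (R : nzRingType).

Lemma muniX_lt (i : 'I_n.+1) (j : 'I_n) :
  val i = val j -> muni ('X_i : {mpoly R[n.+1]}) = ('X_j)%:P.
Proof.
move=> ij; change (nat_of_ord i = nat_of_ord j) in ij.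
rewrite /muni mmapX mmap1U /=; case: splitP => [k /= ik|k /= ik].
  by congr ('X__)%:P; apply/val_inj; exact: etrans (esym ik) ij.
by move: (ltn_ord j); rewrite -ij ik ltnNge leq_addr.
Qed.

Lemma muniX_last (i : 'I_n.+1) : val i = n -> muni ('X_i : {mpoly R[n.+1]}) = 'X.
Proof.
move=> i_n; rewrite /muni mmapX mmap1U /=; case: splitP => [k /= ik|//].
by move: (ltn_ord k); rewrite -ik i_n ltnn.
Qed.

End MuniX.

(* The term [(x - y) v u] has size [2 (size u) - 1], the others have size at
   most [maxn 3 (size u + 1)]. *)
Lemma size_le2_of_jacobiator (R : idomainType) (u v : {poly R}) (s c x y : R) :
  x != y -> size v = size u ->
  (y%:P - 'X) * s%:P * u + ('X - x%:P) * s%:P * v + (x - y)%:P * v * u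
  = c%:P * ((x - y)%:P * (y%:P - 'X) * (x%:P - 'X)) ->
  (size u <= 2)%N.
Proof.
move=> neq_xy size_v E; rewrite leqNgt; apply/negP => size_u.
have u_neq0 : u != 0 by rewrite -size_poly_eq0 -lt0n; lia.
have v_neq0 : v != 0 by rewrite -size_poly_eq0 size_v -lt0n; lia.
have lin (z : R) : (size (z%:P - 'X)%R <= 2)%N.
  by rewrite -opprB size_polyN size_XsubC.
have sizeC : (size (c%:P * ((x - y)%:P * (y%:P - 'X) * (x%:P - 'X)))%R <= 3)%N.
  have := size_mul_leq c%:P ((x - y)%:P * (y%:P - 'X) * (x%:P - 'X)).
  have := size_mul_leq ((x - y)%:P * (y%:P - 'X)) (x%:P - 'X).
  have := size_mul_leq (x - y)%:P (y%:P - 'X).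
  have := size_polyC_leq1 c; have := size_polyC_leq1 (x - y).
  have := lin x; have := lin y.
  lia.
have sizeA (w : R) (p : {poly R}) : (size ((w%:P - 'X) * s%:P * p)%R <= (size p).+1)%N.
  have := size_mul_leq ((w%:P - 'X) * s%:P) p; have := size_mul_leq (w%:P - 'X) s%:P.
  have := size_polyC_leq1 s; have := lin w.
  lia.
have sizeB : (size (('X - x%:P) * s%:P * v)%R <= (size u).+1)%N.
  by rewrite -opprB !mulNr size_polyN -size_v sizeA.
have : (size ((x - y)%:P * (v * u))%R <= maxn 3 (size u).+1)%N.
  have -> : (x - y)%:P * (v * u) = c%:P * ((x - y)%:P * (y%:P - 'X) * (x%:P - 'X))
      - ((y%:P - 'X) * s%:P * u + ('X - x%:P) * s%:P * v).
    by rewrite -E; ring.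
  apply: leq_trans (size_add _ _) _; rewrite size_polyN geq_max.
  rewrite (leq_trans sizeC (leq_maxl _ _)) /=.
  apply: leq_trans (size_add _ _) _; rewrite geq_max.
  by rewrite (leq_trans (sizeA y u) (leq_maxr _ _)) (leq_trans sizeB (leq_maxr _ _)).
rewrite size_Cmul ?subr_eq0 // size_mul // size_v.
lia.
Qed.

Section CyclicIdentities.
Context {R : comNzRingType}.
Implicit Types (p s : R -> R -> R) (a b c : R -> R) (l m n x y z : R).

Definition disc3 x y z := (x - y) ^+ 2 * (x - z) ^+ 2 * (y - z) ^+ 2.

(* With [p x y = {{t, t}}(x, y)] and [a, b, c] evaluation maps, [cyclic_term]
   is [disc3 x y z] times [{{a, {{b, c}}'}} (x) {{b, c}}''] (see [disc3_brL]). *)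
Definition cyclic_term p a b c x y z :=
  p x y * (a x - a y) *
  ((y - z) ^+ 2 * p x z * (b x - b z) * (c x - c z)
   - (x - z) ^+ 2 * p y z * (b y - b z) * (c y - c z)).

Definition cyclic_sum p a b c x y z :=
  cyclic_term p a b c x y z + cyclic_term p b c a y z x + cyclic_term p c a b z x y.

Definition jacobiator s x y z :=
  (y - z) * s x y * s x z + (z - x) * s x y * s y z + (x - y) * s y z * s x z.

Lemma cyclic_sum_cubic {l m n p a b c x y z} :
  (forall u v, p u v = l * (u - v) + m * (u ^+ 2 - v ^+ 2)
                       + n * (u ^+ 2 * v - u * v ^+ 2)) ->
  cyclic_sum p a b c x y z
  = disc3 x y z * ((m ^+ 2 - l * n) * ((a x - a y) * (b y - b z) * (c x - c z))).
Proof. by move=> pE; rewrite /cyclic_sum /cyclic_term /disc3 !pE; ring. Qed.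

Lemma cyclic_sum_idfun {p s a x y z} :
  (forall u v, p u v = (u - v) * s u v) -> (forall u v, s v u = s u v) ->
  (forall u, a u = u) ->
  cyclic_sum p a a a x y z = disc3 x y z * jacobiator s x y z.
Proof.
move=> pE sC aE; rewrite /cyclic_sum /cyclic_term /disc3 /jacobiator !pE !aE.
by rewrite (sC y x) (sC z x) (sC z y); ring.
Qed.

Lemma disc3_cyclic_term {p a b c q t x y z} :
  (x - y) ^+ 2 * t = p x y * (a x - a y) * (q x - q y) ->
  (forall u, (u - z) ^+ 2 * q u = p u z * (b u - b z) * (c u - c z)) ->
  disc3 x y z * t = cyclic_term p a b c x y z.
Proof.
move=> tE qE.
transitivity ((x - z) ^+ 2 * (y - z) ^+ 2 * ((x - y) ^+ 2 * t)).
  by rewrite /disc3; ring.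
rewrite tE; transitivity (p x y * (a x - a y) *
  ((y - z) ^+ 2 * ((x - z) ^+ 2 * q x) - (x - z) ^+ 2 * ((y - z) ^+ 2 * q y))).
  by ring.
by rewrite !qE /cyclic_term; ring.
Qed.

Lemma jacobiator_bilinear {l m n s x y z} :
  (forall u v, s u v = l + m * (u + v) + n * (u * v)) ->
  jacobiator s x y z = (m ^+ 2 - l * n) * ((x - y) * (y - z) * (x - z)).
Proof. by move=> sE; rewrite /jacobiator !sE; ring. Qed.

End CyclicIdentities.

Section Tensors.
Variable K : fieldType.
Local Notation X0 := ('X_i20 : A2 K).
Local Notation X1 := ('X_i21 : A2 K).
Local Notation Y0 := ('X_i30 : A3 K).
Local Notation Y1 := ('X_i31 : A3 K).
Local Notation Y2 := ('X_i32 : A3 K).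
Local Notation bilinear s := (exists lam mu nu : K,
  s = lam%:MP + mu%:MP * (X0 + X1) + nu%:MP * (X0 * X1)).

Definition mhorner k (x : {mpoly K[k]}) : {poly K} -> {mpoly K[k]} :=
  horner_eval x \o map_poly (@mpolyC k K).

Local Notation ev a := (fun x : A3 K => mhorner x a).

HB.instance Definition _ k (x : {mpoly K[k]}) :=
  GRing.RMorphism.copy (mhorner x) (horner_eval x \o map_poly (@mpolyC k K)).

HB.instance Definition _ := GRing.RMorphism.copy (@swap2 K)
  (comp_mpoly [tuple 'X_i21; 'X_i20]).
HB.instance Definition _ := GRing.RMorphism.copy (@tau3 K)
  (comp_mpoly [tuple 'X_i31; 'X_i32; 'X_i30]).
HB.instance Definition _ := GRing.RMorphism.copy (@incl12 K)
  (comp_mpoly [tuple 'X_i30; 'X_i31]).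

Lemma embE n (i : 'I_n) p : emb i p = mhorner 'X_i p.
Proof. by []. Qed.

Lemma mhornerX k (x : {mpoly K[k]}) : mhorner x 'X = x.
Proof. by rewrite /mhorner /= map_polyX horner_evalE hornerX. Qed.

Lemma mhornerC k (x : {mpoly K[k]}) c : mhorner x c%:P = c%:MP.
Proof. by rewrite /mhorner /= map_polyC horner_evalE hornerC. Qed.

Lemma comp_mhorner n k (x : {mpoly K[n]}) (lq : n.-tuple {mpoly K[k]}) p :
  mhorner x p \mPo lq = mhorner (x \mPo lq) p.
Proof.
rewrite /mhorner /= !horner_evalE -horner_map /= -map_poly_comp.
by congr horner; apply: eq_map_poly => c /=; rewrite comp_mpolyC.
Qed.

Lemma bimod11 (d : A2 K) : bimod 1 d 1 = d.
Proof. by rewrite /bimod !embE !rmorph1 mul1r mulr1. Qed.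

Lemma swap2K : involutive (@swap2 K).
Proof.
apply: (mpoly_rmorph_ext (@swap2 K \o @swap2 K) idfun) => [c|[[|[|//]] ?]] /=.
  by rewrite /swap2 !comp_mpolyC.
all: rewrite /swap2 !comp_mpolyXU /=; congr 'X__; exact: val_inj.
Qed.

Lemma swap2_emb0 (p : A K) : swap2 (emb i20 p) = emb i21 p.
Proof. by rewrite /swap2 !embE comp_mhorner comp_mpolyXU. Qed.

Lemma swap2_emb1 (p : A K) : swap2 (emb i21 p) = emb i20 p.
Proof. by rewrite /swap2 !embE comp_mhorner comp_mpolyXU. Qed.

Lemma incl12_emb0 (p : A K) : incl12 (emb i20 p) = mhorner Y0 p.
Proof. by rewrite /incl12 embE comp_mhorner comp_mpolyXU. Qed.

Lemma incl12_emb1 (p : A K) : incl12 (emb i21 p) = mhorner Y1 p.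
Proof. by rewrite /incl12 embE comp_mhorner comp_mpolyXU. Qed.

Lemma tens2_cubicE (lam mu nu : K) :
  lam *: (tens2 'X 1 - tens2 1 'X) + mu *: (tens2 ('X ^+ 2) 1 - tens2 1 ('X ^+ 2))
  + nu *: (tens2 ('X ^+ 2) 'X - tens2 'X ('X ^+ 2))
  = (X0 - X1) * (lam%:MP + mu%:MP * (X0 + X1) + nu%:MP * (X0 * X1)).
Proof.
rewrite /tens2 !embE !rmorphXn !rmorph1 /= !mhornerX -!mul_mpolyC; ring.
Qed.

Lemma disc3_neq0 : disc3 Y0 Y1 Y2 != 0.
Proof. by rewrite /disc3 !mulf_neq0 ?expf_neq0 ?mpolyXB_neq0. Qed.

(* [muni_snd s] is [s(x_0, T)], a polynomial in [T] over K[x_0, x_1]. *)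
Definition muni_snd (s : A2 K) : {poly A2 K} := muni (s \mPo [tuple Y0; Y2]).

Lemma muniY0 : muni Y0 = X0%:P. Proof. exact: muniX_lt. Qed.
Lemma muniY1 : muni Y1 = X1%:P. Proof. exact: muniX_lt. Qed.
Lemma muniY2 : muni Y2 = 'X. Proof. exact: muniX_last. Qed.

Lemma muni_comp01 s : muni (s \mPo [tuple Y0; Y1]) = s%:P.
Proof.
apply: (mpoly_rmorph_ext (@muni 2 K \o comp_mpoly [tuple Y0; Y1]) polyC)
  => [c|[[|[|//]] ?]] /=.
- by rewrite comp_mpolyC muniC.
- by rewrite comp_mpolyXU muniY0; congr ('X__)%:P; apply: val_inj.
- by rewrite comp_mpolyXU muniY1; congr ('X__)%:P; apply: val_inj.
Qed.

Lemma muni_comp12 s : muni (s \mPo [tuple Y1; Y2]) = map_poly (@swap2 K) (muni_snd s).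
Proof.
apply: (mpoly_rmorph_ext (@muni 2 K \o comp_mpoly [tuple Y1; Y2])
          (map_poly (@swap2 K) \o (@muni 2 K \o comp_mpoly [tuple Y0; Y2])))
  => [c|[[|[|//]] ?]] /=.
- by rewrite !comp_mpolyC muniC map_polyC /= /swap2 comp_mpolyC.
- by rewrite !comp_mpolyXU muniY0 muniY1 map_polyC /= /swap2 comp_mpolyXU.
- by rewrite !comp_mpolyXU muniY2 map_polyX.
Qed.

Lemma size_muni_comp12 s : size (muni (s \mPo [tuple Y1; Y2])) = size (muni_snd s).
Proof. by rewrite muni_comp12 size_map_inj_poly ?rmorph0 //; exact: can_inj swap2K. Qed.

Lemma horner_muni_snd s : (muni_snd s).[X1] = s.
Proof.
apply: (mpoly_rmorph_ext
          (horner_eval X1 \o (@muni 2 K \o comp_mpoly [tuple Y0; Y2])) idfun)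
  => [c|[[|[|//]] ?]] /=.
- by rewrite comp_mpolyC muniC horner_evalE hornerC.
- rewrite comp_mpolyXU muniY0 horner_evalE hornerC; congr 'X__; exact: val_inj.
- rewrite comp_mpolyXU muniY2 horner_evalE hornerX; congr 'X__; exact: val_inj.
Qed.

Lemma muni_snd_coef_freeX1 s :
  map_poly (comp_mpoly [tuple X0; 0]) (muni_snd s) = muni_snd s.
Proof.
apply: (mpoly_rmorph_ext
          (map_poly (comp_mpoly [tuple X0; 0]) \o (@muni 2 K \o comp_mpoly [tuple Y0; Y2]))
          (@muni 2 K \o comp_mpoly [tuple Y0; Y2])) => [c|[[|[|//]] ?]] /=.
- by rewrite comp_mpolyC muniC map_polyC /= comp_mpolyC.
- by rewrite comp_mpolyXU muniY0 map_polyC /= comp_mpolyXU.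
- by rewrite comp_mpolyXU muniY2 map_polyX.
Qed.

(* Specializing [s(t, w) = s(w, t)] at [w = 0] and [w = 1] shows that [u0]
   and [u1] are affine in [x_0]. *)
Lemma bilinear_of_affine (s u0 u1 : A2 K) :
  swap2 s = s -> u0 \mPo [tuple X0; 0] = u0 -> u1 \mPo [tuple X0; 0] = u1 ->
  s = u0 + u1 * X1 -> bilinear s.
Proof.
move=> s_sym u0E u1E sE.
have s_at t w : s \mPo [tuple t; w] = u0 \mPo [tuple t; 0] + (u1 \mPo [tuple t; 0]) * w.
  rewrite {1}sE -{1}u0E -{1}u1E rmorphD rmorphM /= !comp_mpoly2A.
  by rewrite !comp_mpolyXU /= comp_mpoly0.
have s_atC t w : s \mPo [tuple t; w] = s \mPo [tuple w; t].
  by rewrite -{1}s_sym /swap2 comp_mpoly2A !comp_mpolyXU.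
have [k0 k0E] := comp_mpoly2_const 2 u0 0 0.
have [k1 k1E] := comp_mpoly2_const 2 u1 0 0.
have [l0 l0E] := comp_mpoly2_const 2 u0 1 0.
have [l1 l1E] := comp_mpoly2_const 2 u1 1 0.
rewrite mpolyC0 in k0E k1E; rewrite mpolyC0 mpolyC1 in l0E l1E.
have u0_affine : u0 = k0%:MP + k1%:MP * X0.
  transitivity (s \mPo [tuple X0; 0]); first by rewrite s_at mulr0 addr0 u0E.
  by rewrite s_atC s_at k0E k1E.
have u1_affine : u1 = l0%:MP + l1%:MP * X0 - (k0%:MP + k1%:MP * X0).
  have <- : u0 + u1 = l0%:MP + l1%:MP * X0.
    transitivity (s \mPo [tuple X0; 1]); first by rewrite s_at mulr1 u0E u1E.
    by rewrite s_atC s_at l0E l1E.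
  by rewrite -u0_affine addrAC subrr add0r.
have l0E' : l0%:MP = k0%:MP + k1%:MP :> A2 K.
  rewrite -k1E {1}u1_affine !(rmorphB, rmorphD, rmorphM) /=.
  rewrite !comp_mpolyC comp_mpolyXU /=.
  by rewrite !mulr0 !addr0 addrC subrK.
exists k0, k1, (l1 - k1).
by rewrite sE u0_affine u1_affine l0E' rmorphB /=; ring.
Qed.

Lemma bilinear_of_jacobiator (s : A2 K) (c : K) :
  swap2 s = s ->
  jacobiator (fun x y => s \mPo [tuple x; y]) Y0 Y1 Y2
  = c%:MP * ((Y0 - Y1) * (Y1 - Y2) * (Y0 - Y2)) ->
  bilinear s.
Proof.
move=> s_sym J.
have size_u : (size (muni_snd s) <= 2)%N.
  apply: (size_le2_of_jacobiator _ _ s c%:MP X0 X1 _ (size_muni_comp12 s)).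
    by rewrite -subr_eq0 mpolyXB_neq0.
  have := congr1 (@muni 2 K) J; rewrite /jacobiator /muni_snd /=.
  (* Generalizing the three evaluations of [s] keeps the rewriting below from
     unfolding them, which would be very slow. *)
  move: (muni_comp01 s); move: (s \mPo [tuple Y0; Y1]) => s01 s01E.
  move: (s \mPo [tuple Y0; Y2]) (s \mPo [tuple Y1; Y2]) => s02 s12.
  by rewrite !rmorphD !rmorphM /= !muniB s01E muniY0 muniY1 muniY2 muniC polyCN.
have coefE i : (muni_snd s)`_i \mPo [tuple X0; 0] = (muni_snd s)`_i.
  by rewrite -coef_map muni_snd_coef_freeX1.
apply: (bilinear_of_affine s_sym (coefE 0%N) (coefE 1%N)).
rewrite -{1}(horner_muni_snd s) (horner_coef_wide _ size_u) big_ord_recr big_ord1 /=.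
by rewrite expr0 mulr1 expr1.
Qed.

Lemma antisym_factor (p : A2 K) : 2%:R != 0 :> K ->
  swap2 p = - p -> exists s, swap2 s = s /\ p = (X0 - X1) * s.
Proof.
move=> two_neq0 p_anti.
have diag0 : p \mPo [tuple X1; X1] = 0.
  have := congr1 (comp_mpoly [tuple X1; X1]) p_anti.
  rewrite /swap2 comp_mpoly2A !comp_mpolyXU /= raddfN => /eqP.
  by rewrite -addr_eq0 -mulr2n -scaler_nat scaler_eq0 (negbTE two_neq0) => /eqP.
have [s pE] := mpoly2_subdiag_factor p; rewrite diag0 subr0 in pE.
exists s; split=> //; apply: (mulfI (mpolyXB_neq0 _ i21 i20 isT)).
move: p_anti; rewrite pE rmorphM rmorphB /= /swap2 !comp_mpolyXU /= => ->.
by rewrite -mulNr opprB.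
Qed.

Section Bracket.
Variable br : A K -> A K -> A2 K.
Hypothesis hbr : double_bracket br.
Local Notation P := (br 'X 'X).

Lemma brDr a b c : br a (b + c) = br a b + br a c.
Proof. by case: hbr => _ + _ _ => /(_ 1 a b c); rewrite !scale1r. Qed.

Lemma br0r a : br a 0 = 0.
Proof. by apply: (addrI (br a 0)); rewrite -brDr !addr0. Qed.

Lemma brZr a k b : br a (k *: b) = k *: br a b.
Proof. by case: hbr => _ + _ _ => /(_ k a b 0); rewrite !addr0 br0r addr0. Qed.

Lemma br1r a : br a 1 = 0.
Proof.
case: hbr => _ _ _ /(_ a 1 1); rewrite mulr1 !bimod11 => h.
by apply: (addrI (br a 1)); rewrite -h addr0.
Qed.

Lemma brCr a c : br a c%:P = 0.
Proof. by rewrite -alg_polyC brZr br1r scaler0. Qed.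

Lemma br_mulXBr a p : (X0 - X1) * br a p = br a 'X * (emb i20 p - emb i21 p).
Proof.
elim/poly_ind: p => [|p c IH]; first by rewrite br0r !embE !rmorph0 subrr !mulr0.
case: hbr => _ _ _ Leibniz.
rewrite brDr brCr addr0 Leibniz /bimod !embE !rmorphD !rmorphM /= !mhornerX !mhornerC.
rewrite !rmorph1 mul1r mulr1.
transitivity ((X0 - X1) * br a p * X1 + (X0 - X1) * mhorner X0 p * br a 'X); first ring.
rewrite IH !embE; ring.
Qed.

Lemma swap2_brXX : swap2 P = - P.
Proof. by case: hbr => _ _ /(_ 'X 'X) {1}-> _; rewrite rmorphN /= swap2K. Qed.

Lemma br_mulXBl a : (X0 - X1) * br a 'X = P * (emb i20 a - emb i21 a).
Proof.
case: hbr => _ _ antisym _; rewrite antisym.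
have := congr1 (@swap2 K) (br_mulXBr 'X a).
rewrite !rmorphM !rmorphB /= swap2_brXX swap2_emb0 swap2_emb1.
rewrite /swap2 !comp_mpolyXU /= => h.
transitivity ((X1 - X0) * swap2 (br 'X a)); first ring.
rewrite /swap2 h; ring.
Qed.

Lemma br_mulXB2 a b :
  (X0 - X1) ^+ 2 * br a b = P * (emb i20 a - emb i21 a) * (emb i20 b - emb i21 b).
Proof.
transitivity ((X0 - X1) * ((X0 - X1) * br a b)); first ring.
rewrite br_mulXBr mulrA br_mulXBl; ring.
Qed.

Definition brXX_at (x y : A3 K) := P \mPo [tuple x; y].

Lemma incl12_br_mulXBr a p :
  (Y0 - Y1) * incl12 (br a p) = incl12 (br a 'X) * (mhorner Y0 p - mhorner Y1 p).
Proof.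
have := congr1 (@incl12 K) (br_mulXBr a p).
by rewrite !rmorphM !rmorphB /= incl12_emb0 incl12_emb1 /incl12 !comp_mpolyXU.
Qed.

Lemma incl12_br_mulXBl a :
  (Y0 - Y1) * incl12 (br a 'X) = brXX_at Y0 Y1 * (mhorner Y0 a - mhorner Y1 a).
Proof.
have := congr1 (@incl12 K) (br_mulXBl a).
by rewrite !rmorphM !rmorphB /= incl12_emb0 incl12_emb1 /incl12 !comp_mpolyXU.
Qed.

Lemma brL_mulXB a d : (Y0 - Y1) * brL br a d
  = incl12 (br a 'X) * ((d \mPo [tuple Y0; Y2]) - (d \mPo [tuple Y1; Y2])).
Proof.
rewrite /brL !comp_mpolyE -sumrB !mulr_sumr; apply: eq_bigr => m _.
rewrite !big_ord2 /= -scalerBr -!scalerAr; congr (_ *: _).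
by rewrite mulrA incl12_br_mulXBr !rmorphXn /= !mhornerX; ring.
Qed.

Lemma comp_br_mulXB2 b c (x y : A3 K) :
  (x - y) ^+ 2 * (br b c \mPo [tuple x; y])
  = brXX_at x y * (mhorner x b - mhorner y b) * (mhorner x c - mhorner y c).
Proof.
have := congr1 (comp_mpoly [tuple x; y]) (br_mulXB2 b c).
by rewrite !rmorphM !rmorphB /= !embE !comp_mhorner !comp_mpolyXU.
Qed.

Local Notation cyclic_term_br a b c :=
  (cyclic_term brXX_at (ev a) (ev b) (ev c)).

Lemma disc3_brL a b c :
  disc3 Y0 Y1 Y2 * brL br a (br b c) = cyclic_term_br a b c Y0 Y1 Y2.
Proof.
apply: (disc3_cyclic_term (q := fun x => br b c \mPo [tuple x; Y2])); last first.
  by move=> x; exact: comp_br_mulXB2.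
by rewrite expr2 -mulrA brL_mulXB mulrA incl12_br_mulXBl.
Qed.

Lemma comp_cyclic_term a b c (x y z : A3 K) (lq : 3.-tuple (A3 K)) :
  cyclic_term_br a b c x y z \mPo lq
  = cyclic_term_br a b c (x \mPo lq) (y \mPo lq) (z \mPo lq).
Proof.
rewrite /cyclic_term /brXX_at !(rmorphM, rmorphB, rmorphXn) /=.
by rewrite !comp_mpoly2A !comp_mhorner.
Qed.

Lemma disc3_tau3 d : disc3 Y0 Y1 Y2 * tau3 d = tau3 (disc3 Y0 Y1 Y2 * d).
Proof.
rewrite rmorphM /=; congr (_ * _).
by rewrite /disc3 !(rmorphM, rmorphB, rmorphXn) /= /tau3 !comp_mpolyXU /=; ring.
Qed.

Lemma disc3_triple_bracket a b c :
  disc3 Y0 Y1 Y2 * triple_bracket br a b c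
  = cyclic_sum brXX_at (ev a) (ev b) (ev c) Y0 Y1 Y2.
Proof.
rewrite /triple_bracket !mulrDr !disc3_tau3 /cyclic_sum.
congr (_ + _ + _); first exact: disc3_brL.
  by rewrite disc3_brL /tau3 comp_cyclic_term !comp_mpolyXU.
by rewrite disc3_brL /tau3 !comp_cyclic_term !comp_mpolyXU.
Qed.

Lemma quasi_PoissonE : quasi_Poisson br <->
  forall a b c,
    cyclic_sum brXX_at (ev a) (ev b) (ev c) Y0 Y1 Y2
    = disc3 Y0 Y1 Y2 * (4^-1%:MP * ((mhorner Y0 a - mhorner Y1 a) *
        (mhorner Y1 b - mhorner Y2 b) * (mhorner Y0 c - mhorner Y2 c))).
Proof.
have tens3E a b c : tens3 a b c = mhorner Y0 a * mhorner Y1 b * mhorner Y2 c by [].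
split=> qP a b c.
  rewrite -disc3_triple_bracket qP !tens3E !rmorphM !rmorph1 /= -mul_mpolyC.
  by congr (_ * _); ring.
apply: (mulfI disc3_neq0); rewrite disc3_triple_bracket qP !tens3E.
by rewrite !rmorphM !rmorph1 /= -mul_mpolyC; congr (_ * _); ring.
Qed.

Lemma quasi_Poisson_of_cubic (lam mu nu : K) :
  br 'X 'X = (X0 - X1) * (lam%:MP + mu%:MP * (X0 + X1) + nu%:MP * (X0 * X1)) ->
  4%:R * (mu ^+ 2 - lam * nu) = 1 -> quasi_Poisson br.
Proof.
move=> brXXE norm; apply/quasi_PoissonE => a b c.
have brXX_atE x y : brXX_at x y = lam%:MP * (x - y) + mu%:MP * (x ^+ 2 - y ^+ 2)
                                  + nu%:MP * (x ^+ 2 * y - x * y ^+ 2).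
  rewrite /brXX_at brXXE !(rmorphM, rmorphB, rmorphD) /=.
  by rewrite !comp_mpolyC !comp_mpolyXU /=; ring.
have -> : (4^-1 : K) = mu ^+ 2 - lam * nu.
  have four_neq0 : (4%:R : K) != 0.
    by apply/eqP => four0; move: (oner_neq0 K); rewrite -norm four0 mul0r eqxx.
  by apply: (mulfI four_neq0); rewrite mulfV.
rewrite rmorphB rmorphXn rmorphM /=.
exact: cyclic_sum_cubic brXX_atE.
Qed.

Lemma cubic_of_quasi_Poisson : 2%:R != 0 :> K -> quasi_Poisson br ->
  exists lam mu nu : K,
    br 'X 'X = (X0 - X1) * (lam%:MP + mu%:MP * (X0 + X1) + nu%:MP * (X0 * X1))
    /\ 4%:R * (mu ^+ 2 - lam * nu) = 1.
Proof.
move=> two_neq0 /quasi_PoissonE/(_ 'X 'X 'X); rewrite !mhornerX.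
have [s [s_sym brXXE]] := antisym_factor two_neq0 swap2_brXX.
have brXX_atE x y : brXX_at x y = (x - y) * (s \mPo [tuple x; y]).
  by rewrite /brXX_at brXXE rmorphM rmorphB /= !comp_mpolyXU.
have s_atC (x y : A3 K) : s \mPo [tuple y; x] = s \mPo [tuple x; y].
  by rewrite -{2}s_sym /swap2 comp_mpoly2A !comp_mpolyXU.
rewrite (cyclic_sum_idfun brXX_atE s_atC (@mhornerX 3)).
move/(mulfI disc3_neq0) => J.
have [lam [mu [nu sE]]] := bilinear_of_jacobiator s_sym J.
have s_atE (x y : A3 K) :
    s \mPo [tuple x; y] = lam%:MP + mu%:MP * (x + y) + nu%:MP * (x * y).
  by rewrite sE !(rmorphD, rmorphM) /= !comp_mpolyC !comp_mpolyXU.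
rewrite (jacobiator_bilinear s_atE) in J.
have V_neq0 : (Y0 - Y1) * (Y1 - Y2) * (Y0 - Y2) != 0.
  by rewrite !mulf_neq0 ?mpolyXB_neq0.
move: (mulIf V_neq0 J); rewrite -rmorphXn -rmorphM -rmorphB.
move=> /(can_inj (@mpolyCK 3 K)) normE.
exists lam, mu, nu; split; first by rewrite brXXE sE.
by rewrite normE mulfV // -[4%N]/(2 * 2)%N natrM mulf_neq0.
Qed.

End Bracket.

End Tensors.

Theorem proposition4p1 (K : fieldType) (charK : [pchar K] =i pred0)
    (br : A K -> A K -> A2 K) (hbr : double_bracket br) :
  quasi_Poisson br <->
  exists lam mu nu : K,
    br 'X 'X = lam *: (tens2 'X 1 - tens2 1 'X)
               + mu *: (tens2 ('X ^+ 2) 1 - tens2 1 ('X ^+ 2))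
               + nu *: (tens2 ('X ^+ 2) 'X - tens2 'X ('X ^+ 2))
    /\ 4%:R * (mu ^+ 2 - lam * nu) = 1.
Proof.
have two_neq0 : 2%:R != 0 :> K by rewrite ((pcharf0P K).1 charK).
split=> [/(cubic_of_quasi_Poisson hbr two_neq0) [lam [mu [nu [brXXE norm]]]] |].
  by exists lam, mu, nu; rewrite tens2_cubicE.
case=> lam [mu [nu [brXXE norm]]].
by apply: (quasi_Poisson_of_cubic hbr _ norm); rewrite brXXE tens2_cubicE.
Qed.
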